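(* Let $G$ be the non-abelian group of order $27$ and exponent $3$. Every sequence of length $7$ over $G$ contains a non-empty product-one subsequence. Consequently $\mathsf{d}(G)=6$.
   Context: A sequence over $G$ is a finite unordered list (multiset) of elements of $G$; a subsequence is a sub-multiset; a non-empty sequence is product-one if some ordering of its terms has product $1$. The small Davenport constant $\mathsf{d}(G)$ is the maximal length of a sequence over $G$ having no non-empty product-one subsequence. *)

From mathcomp Require Import all_boot all_fingroup.
Set Implicit Arguments. Unset Strict Implicit. Unset Printing Implicit Defensive.

(* A sequence over gT is a finite list; its order is irrelevant for the
   notions below (all of them are invariant under permutation). *)

Definition product_one (gT : finGroupType) (s : seq gT) : Prop :=
  s <> [::] /\ exists t : seq gT, perm_eq t s /\ (\prod_(x <- t) x)%g = 1%g.

Definition has_product_one_subseq (gT : finGroupType) (s : seq gT) : Prop :=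
  exists m : bitseq, product_one (mask m s).

Definition product_one_free (gT : finGroupType) (s : seq gT) : Prop :=
  ~ has_product_one_subseq s.

Definition is_small_davenport (gT : finGroupType) (n : nat) : Prop :=
  (exists s : seq gT, size s = n /\ product_one_free s) /\
  (forall s : seq gT, product_one_free s -> size s <= n).

From HB Require Import structures.
From mathcomp Require Import all_boot all_fingroup all_solvable.
Set Implicit Arguments. Unset Strict Implicit. Unset Printing Implicit Defensive.

(* G is extraspecial of order 3^3 and exponent 3, hence generated by x, y with
   [y, x] central, and every element is x^a y^b [y, x]^c for a unique triple
   (a, b, c) of residues mod 3: G is the Heisenberg group over F_3, on which
   both bounds become finite computations.  Every sequence of length 7 is
   (after sorting) covered by an exhaustive search that extends a sorted
   sequence by g only while g^-1 is not the product of some ordering of a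
   sub-multiset; the sequence x, x, x^2 y, x^2 y, x y^2, x y^2 is checked to
   be product-one free by enumerating all orderings of its sub-multisets. *)

Section Submultiset.
Variable T : eqType.
Implicit Types s t : seq T.

Definition submultiset t s := forall x, count_mem x t <= count_mem x s.

Lemma submultiset_perml t t' s : perm_eq t t' -> submultiset t s -> submultiset t' s.
Proof. by move=> /seq.permP eq_tt' sub_ts x; rewrite -eq_tt'. Qed.

Lemma submultiset_permr t s s' : perm_eq s s' -> submultiset t s -> submultiset t s'.
Proof. by move=> /seq.permP eq_ss' sub_ts x; rewrite -eq_ss'. Qed.

Lemma submultiset_cons x t s : submultiset t s -> submultiset (x :: t) (x :: s).
Proof. by move=> sub_ts y /=; rewrite leq_add2l. Qed.

Lemma submultiset_catl t s1 s2 : submultiset t s2 -> submultiset t (s1 ++ s2).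
Proof. by move=> sub_ts x; rewrite count_cat (leq_trans (sub_ts x)) ?leq_addl. Qed.

Lemma submultiset_catr t s1 s2 : submultiset t s1 -> submultiset t (s1 ++ s2).
Proof. by move=> sub_ts x; rewrite count_cat (leq_trans (sub_ts x)) ?leq_addr. Qed.

Lemma size_submultiset t s : submultiset t s -> size t <= size s.
Proof.
by case/count_maskP=> m _ /perm_size->; apply/size_subseq/mask_subseq.
Qed.

Lemma mem_submultiset t s : submultiset t s -> {subset t <= s}.
Proof. by move=> sub_ts x; rewrite -!has_pred1 !has_count => /leq_trans; apply. Qed.

End Submultiset.

Lemma submultiset_map (T U : eqType) (f : T -> U) t s :
  submultiset t s -> submultiset (map f t) (map f s).
Proof.
case/count_maskP=> m _ /(perm_map f)/seq.permP eq_t x.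
by rewrite eq_t map_mask leq_count_mask.
Qed.

Lemma submultiset_map_inj (T U : eqType) (f : T -> U) t s : injective f ->
  submultiset (map f t) (map f s) -> submultiset t s.
Proof.
move=> inj_f sub_ts x; have := sub_ts (f x).
have preim_fx (u : seq T) : count (preim f (pred1 (f x))) u = count_mem x u.
  by apply: eq_count => y /=; rewrite (inj_eq inj_f).
by rewrite !count_map !preim_fx.
Qed.

Lemma subset_map_preimage (T U : eqType) (f : T -> U) (s : seq T) (t : seq U) :
  {subset t <= map f s} -> exists2 t', t = map f t' & {subset t' <= s}.
Proof.
elim: t => [|g t IHt] sub_t; first by exists [::].
have [|t' -> sub_t'] := IHt; first by move=> h t_h; rewrite sub_t ?inE ?t_h ?orbT.
have /mapP[u s_u ->] := sub_t g (mem_head g t).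
by exists (u :: t') => // v; rewrite inE => /predU1P[-> //|/sub_t'].
Qed.

Lemma uniq_map_inj_in (T U : eqType) (f : T -> U) (s : seq T) :
  uniq (map f s) -> {in s &, injective f}.
Proof.
elim: s => //= a s IHs /andP[fa_notin uniq_fs] u v; rewrite !inE.
case/predU1P=> [->|s_u] /predU1P[->|s_v] // eq_f.
- by move: fa_notin; rewrite eq_f map_f.
- by move: fa_notin; rewrite -eq_f map_f.
- exact: IHs.
Qed.

Section ProductOne.
Variable gT : finGroupType.
Implicit Types s t : seq gT.

Lemma has_product_one_subseqP s : has_product_one_subseq s <->
  exists t, [/\ t != [::], submultiset t s & (\prod_(g <- t) g)%g = 1%g].
Proof.
split=> [[m [nz_ms [t [eq_t prod_t]]]] | [t [nz_t sub_ts prod_t]]].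
  exists t; split=> //; last by move=> x; rewrite (seq.permP eq_t) leq_count_mask.
  by apply/eqP=> t0; apply/nz_ms/nilP; rewrite /nilp -(perm_size eq_t) t0.
have [m _ eq_t] := (count_maskP t s).1 sub_ts.
exists m; split; last by exists t.
by move=> ms0; move: nz_t; rewrite -size_eq0 (perm_size eq_t) ms0.
Qed.

Lemma has_product_one_subseq_catr s1 s2 :
  has_product_one_subseq s1 -> has_product_one_subseq (s1 ++ s2).
Proof.
case/has_product_one_subseqP=> t [nz_t sub_t prod_t].
by apply/has_product_one_subseqP; exists t; split=> //; apply: submultiset_catr.
Qed.

Lemma product_one_free_size_lt n s :
  (forall s', size s' = n -> has_product_one_subseq s') ->
  product_one_free s -> size s < n.
Proof.
move=> has_n free_s; rewrite ltnNge; apply/negP=> le_ns; apply: free_s.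
rewrite -(cat_take_drop n s); apply/has_product_one_subseq_catr/has_n.
by rewrite size_take_min; apply/minn_idPl.
Qed.

End ProductOne.

Inductive trit := T0 | T1 | T2.

Definition trit_eqb (a b : trit) : bool :=
  match a, b with T0, T0 | T1, T1 | T2, T2 => true | _, _ => false end.

Lemma trit_eqP : Equality.axiom trit_eqb.
Proof. by do 2 case; constructor. Qed.

HB.instance Definition _ := hasDecEq.Build trit trit_eqP.

Definition trit_add (a b : trit) : trit :=
  match a, b with
  | T0, c | c, T0 => c
  | T1, T1 => T2
  | T1, T2 | T2, T1 => T0
  | T2, T2 => T1
  end.

Definition trit_mul (a b : trit) : trit :=
  match a, b with
  | T0, _ | _, T0 => T0
  | T1, c | c, T1 => c
  | T2, T2 => T1
  end.

Definition nat_of_trit (a : trit) : nat :=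
  match a with T0 => 0 | T1 => 1 | T2 => 2 end.

Lemma nat_of_trit_add a b :
  nat_of_trit (trit_add a b) = (nat_of_trit a + nat_of_trit b) %% 3.
Proof. by case: a; case: b. Qed.

Lemma nat_of_trit_mul a b :
  nat_of_trit (trit_mul a b) = (nat_of_trit a * nat_of_trit b) %% 3.
Proof. by case: a; case: b. Qed.

Definition trits : seq trit := [:: T0; T1; T2].

(* (a, b, c) stands for x^a y^b [y, x]^c, so that y^b x^d = x^d y^b [y, x]^(b d). *)
Definition heis : Type := trit * trit * trit.

Definition heis1 : heis := (T0, T0, T0).

Definition heis_mul (u v : heis) : heis :=
  let: (a, b, c) := u in let: (d, e, f) := v in
  (trit_add a d, trit_add b e, trit_add (trit_add c f) (trit_mul b d)).

Definition heis_inv (u : heis) : heis := heis_mul u u.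

Lemma heis_mulV u : heis_mul u (heis_inv u) = heis1.
Proof. by case: u => [[[] []] []]. Qed.

Definition heis_prod (t : seq heis) : heis := foldr heis_mul heis1 t.

Definition heis_elems : seq heis :=
  [seq (ab, c) | c <- trits, ab <- [seq (a, b) | b <- trits, a <- trits]].

Lemma mem_heis_elems u : u \in heis_elems.
Proof. by case: u => [[[] []] []]. Qed.

Definition heis_code (u : heis) : nat :=
  let: (a, b, c) := u in nat_of_trit a + 3 * nat_of_trit b + 9 * nat_of_trit c.

Definition heis_le : rel heis := fun u v => heis_code u <= heis_code v.

Lemma heis_le_trans : transitive heis_le.
Proof. by move=> u v w; apply: leq_trans. Qed.

Lemma heis_le_total : total heis_le.
Proof. by move=> u v; apply: leq_total. Qed.

Definition heis_has_one_subseq (s : seq heis) : Prop :=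
  exists t, [/\ t != [::], submultiset t s & heis_prod t = heis1].

Lemma heis_has_one_subseq_perm s s' : perm_eq s s' ->
  heis_has_one_subseq s -> heis_has_one_subseq s'.
Proof.
move=> eq_ss' [t [nz_t sub_ts prod_t]]; exists t; split=> //.
exact: submultiset_permr sub_ts.
Qed.

Inductive triple (A : Type) := Triple of A & A & A.
Arguments Triple {A}.

Definition tget A (i : trit) (s : triple A) : A :=
  let: Triple a0 a1 a2 := s in match i with T0 => a0 | T1 => a1 | T2 => a2 end.

Definition tupd A (i : trit) (f : A -> A) (s : triple A) : triple A :=
  let: Triple a0 a1 a2 := s in
  match i with
  | T0 => Triple (f a0) a1 a2
  | T1 => Triple a0 (f a1) a2
  | T2 => Triple a0 a1 (f a2)
  end.

Lemma tget_upd A i j f (s : triple A) :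
  tget i (tupd j f s) = if i == j then f (tget i s) else tget i s.
Proof. by case: s; case: i; case: j. Qed.

Definition tconst A (a : A) : triple A := Triple a a a.

Definition hset : Type := triple (triple (triple bool)).

Definition hset0 : hset := tconst (tconst (tconst false)).

Definition hmem (u : heis) (S : hset) : bool :=
  let: (a, b, c) := u in tget c (tget b (tget a S)).

Definition hins (u : heis) (S : hset) : hset :=
  let: (a, b, c) := u in tupd a (tupd b (tupd c (fun=> true))) S.

Lemma hmem0 u : hmem u hset0 = false.
Proof. by case: u => [[[] []] []]. Qed.

Lemma hmem_ins v u S : hmem v (hins u S) = (v == u) || hmem v S.
Proof.
case: v u => [[a' b'] c'] [[a b] c] /=; rewrite !xpair_eqE !tget_upd.
by case: (a' == a); rewrite /= ?tget_upd; case: (b' == b); rewrite /= ?tget_upd;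
  case: (c' == c).
Qed.

(* Evaluates much faster than the generic ==; it only serves to drop
   duplicate picks, on which no proof depends. *)
Definition heis_eqb (u v : heis) : bool :=
  let: (a, b, c) := u in let: (d, e, f) := v in
  if trit_eqb a d then if trit_eqb b e then trit_eqb c f else false else false.

Fixpoint picks (r : seq heis) : seq (heis * seq heis) :=
  if r is a :: r' then
    (a, r') :: [seq (p.1, a :: p.2) | p <- picks r' & ~~ heis_eqb p.1 a]
  else [::].

Lemma picks_perm r p : p \in picks r -> perm_eq r (p.1 :: p.2).
Proof.
elim: r p => //= a r IHr p; rewrite inE => /predU1P[-> // |].
case/mapP=> q; rewrite mem_filter => /andP[_ /IHr eq_rq] -> /=.
by apply/seq.permP=> P /=; rewrite (seq.permP eq_rq) /= addnCA.
Qed.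

(* Adds to S the products w * p for all orderings w of the sub-multisets of
   r; the fuel n only needs to be size r. *)
Fixpoint ins_arrangements (n : nat) (p : heis) (r : seq heis) (S : hset) : hset :=
  if n is n'.+1 then
    foldl (fun S q => ins_arrangements n' (heis_mul q.1 p) q.2 S) (hins p S) (picks r)
  else hins p S.

Lemma ins_arrangementsP n p r S v : hmem v (ins_arrangements n p r S) ->
  hmem v S \/ exists2 t, submultiset t r & v = foldr heis_mul p t.
Proof.
have mem_hins p' r' S' : hmem v (hins p' S') ->
    hmem v S' \/ exists2 t, submultiset t r' & v = foldr heis_mul p' t.
  by rewrite hmem_ins => /predU1P[->|]; [right; exists [::] | left].
elim: n p r S => [|n IHn] p r S /=; first exact: mem_hins.
have mem_fold S0 qs : {subset qs <= picks r} ->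
    hmem v (foldl (fun S q => ins_arrangements n (heis_mul q.1 p) q.2 S) S0 qs) ->
    hmem v S0 \/ exists2 t, submultiset t r & v = foldr heis_mul p t.
  elim: qs S0 => [|q qs IHqs] S0 sub_qs /=; first by left.
  case/IHqs=> [q' qs_q'|/IHn[|[t sub_t ->]]|]; try by [left | right].
    by apply: sub_qs; rewrite inE qs_q' orbT.
  right; exists (rcons t q.1); last by rewrite foldr_rcons.
  have eq_qr : perm_eq (q.1 :: q.2) r by rewrite perm_sym picks_perm ?sub_qs ?mem_head.
  apply: submultiset_permr eq_qr _.
  by apply: submultiset_perml (submultiset_cons q.1 sub_t); rewrite perm_sym perm_rcons.
by case/(mem_fold _ _ (fun=> id))=> [/mem_hins|]; last right.
Qed.

Definition arrangement_products (r : seq heis) : hset :=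
  ins_arrangements (size r) heis1 r hset0.

Lemma arrangement_productsP r v : hmem v (arrangement_products r) ->
  exists2 t, submultiset t r & v = heis_prod t.
Proof. by case/ins_arrangementsP; rewrite ?hmem0. Qed.

(* search r d certifies that every sorted e ++ r with size e = d has a
   product-one subsequence: g is only prepended to r while g^-1 is not an
   arrangement product of r, for otherwise g and that arrangement multiply
   to one. *)
Fixpoint search (r : seq heis) (d : nat) : bool :=
  if d is d'.+1 then
    let P := arrangement_products r in
    all (fun g => if ~~ heis_le g (head g r) then true
                  else if hmem (heis_inv g) P then true
                  else search (g :: r) d') heis_elems
  else false.

Lemma search_sound d r : search r d -> forall e, size e = d ->
  sorted heis_le (e ++ r) -> heis_has_one_subseq (e ++ r).
Proof.
elim: d r => [//|d IHd] r search_r e.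
case/lastP: e => [//|e g]; rewrite size_rcons cat_rcons => -[size_e] sorted_egr.
have le_g_head : heis_le g (head g r).
  have /= := subseq_sorted heis_le_trans (suffix_subseq e (g :: r)) sorted_egr.
  by case: r {search_r IHd sorted_egr} => [_ | h r /andP[]] //; apply: leqnn.
have := allP search_r g (mem_heis_elems g); rewrite le_g_head /=.
case: ifP => [inv_g _ | _ search_gr]; last exact: IHd search_gr e size_e sorted_egr.
have [t sub_t prod_t] := arrangement_productsP inv_g.
exists (g :: t); split=> //; first exact/submultiset_catl/submultiset_cons.
by rewrite /= -prod_t heis_mulV.
Qed.

Fixpoint words (T : Type) (A : seq T) (k : nat) : seq (seq T) :=
  if k is k'.+1 then [seq a :: w | a <- A, w <- words A k'] else [:: [::]].

Lemma mem_words (T : eqType) (A w : seq T) :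
  {subset w <= A} -> w \in words A (size w).
Proof.
elim: w => [|a w IHw] //= sub_aw; apply: allpairs_f; first by rewrite sub_aw ?mem_head.
by apply: IHw => b w_b; rewrite sub_aw ?inE ?w_b ?orbT.
Qed.

(* x, x, x^2 y, x^2 y, x y^2, x y^2 *)
Definition free_witness : seq heis :=
  [:: (T1, T0, T0); (T1, T0, T0); (T2, T1, T0); (T2, T1, T0); (T1, T2, T0); (T1, T2, T0)].

Lemma free_witness_check : all (fun k => all (fun w =>
    all (fun a => count_mem a w <= count_mem a free_witness) (undup free_witness) ==>
    (heis_prod w != heis1)) (words (undup free_witness) k)) (iota 1 6).
Proof. by vm_compute. Qed.

Lemma free_witness_free : ~ heis_has_one_subseq free_witness.
Proof.
case=> t [nz_t sub_t prod_t].
have sub_alph : {subset t <= undup free_witness}.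
  by move=> u /(mem_submultiset sub_t); rewrite mem_undup.
have size_t : size t \in iota 1 6.
  by rewrite mem_iota lt0n size_eq0 nz_t ltnS (size_submultiset sub_t).
move/allP: free_witness_check => /(_ _ size_t)/allP/(_ _ (mem_words sub_alph)).
by rewrite prod_t eqxx implybF => /allP; apply=> u _; apply: sub_t.
Qed.

Lemma search7 : search [::] 7.
Proof. by vm_compute. Qed.

Lemma heis_has_one_subseq7 s : size s = 7 -> heis_has_one_subseq s.
Proof.
move=> size_s; have := search_sound search7 (e := sort heis_le s).
rewrite cats0 size_sort => /(_ size_s (sort_sorted heis_le_total s)).
exact/heis_has_one_subseq_perm/permEl/perm_sort.
Qed.

Local Open Scope group_scope.

Lemma central_commutator_generators (gT : finGroupType) :
  #|[set: gT]| = 27 -> ~~ abelian [set: gT] -> (forall g : gT, g ^+ 3 = 1) ->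
  exists x y : gT,
    [/\ <[x]> <*> <[y]> = [set: gT], commute x [~ y, x] & commute y [~ y, x]].
Proof.
move=> card_G nabelG exp3.
have pG : 3.-group [set: gT]%G by rewrite /pgroup card_G.
have esG : extraspecial [set: gT]%G.
  by apply: (p3group_extraspecial (p := 3)) => //=; rewrite card_G.
have expG : exponent [set: gT]%G %| 3 by apply/exponentP=> g _; apply: exp3.
have p3 : prime 3 by [].
have isoG := isoGrp_trans (isog_pX1p2 p3 esG expG card_G) (Grp_pX1p2 p3).
case/existsP: (isoGrp_hom isoG) => [[x y]] /=.
case/eqP=> defG _ _ /eqP/commgP cRx /eqP/commgP cRy.
by exists y, x; rewrite joingC; split=> //; apply: commute_sym.
Qed.

Section HeisenbergImage.
Variables (gT : finGroupType) (x y : gT).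
Hypotheses (exp3 : forall g : gT, g ^+ 3 = 1).
Hypotheses (cxz : commute x [~ y, x]) (cyz : commute y [~ y, x]).

Definition heis_val (u : heis) : gT :=
  let: (a, b, c) := u in
  x ^+ nat_of_trit a * y ^+ nat_of_trit b * [~ y, x] ^+ nat_of_trit c.

Lemma heis_val1 : heis_val heis1 = 1.
Proof. by rewrite /= !mulg1. Qed.

Lemma heis_valM u v : heis_val (heis_mul u v) = heis_val u * heis_val v.
Proof.
have expg3 (k : nat) (g : gT) : g ^+ (k %% 3) = g ^+ k := expg_mod _ (exp3 g).
case: u v => [[a b] c] [[d e] f] /=.
rewrite !nat_of_trit_add nat_of_trit_mul !expg3 !expgD !expg3.
set A := nat_of_trit a; set B := nat_of_trit b; set C := nat_of_trit c.
set D := nat_of_trit d; set E := nat_of_trit e; set F := nat_of_trit f.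
have yx : y ^+ B * x ^+ D = x ^+ D * y ^+ B * [~ y, x] ^+ (B * D).
  by rewrite commgC commXXg.
have czx : commute ([~ y, x] ^+ C) (x ^+ D) := commuteX2 C D (commute_sym cxz).
have czy (i : nat) : commute ([~ y, x] ^+ i) (y ^+ E) := commuteX2 i E (commute_sym cyz).
rewrite !mulgA -(mulgA _ _ (x ^+ D)) czx mulgA -(mulgA (x ^+ A) (y ^+ B)) yx !mulgA.
rewrite -(mulgA _ ([~ y, x] ^+ C)) czy mulgA -(mulgA _ ([~ y, x] ^+ (B * D))) czy.
by rewrite mulgA -!mulgA -!expgD (addnC (B * D)%N).
Qed.

Lemma heis_val_prod t : heis_val (heis_prod t) = \prod_(u <- t) heis_val u.
Proof.
elim: t => [|u t IHt]; first by rewrite big_nil heis_val1.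
by rewrite big_cons /= heis_valM IHt.
Qed.

Hypothesis defG : <[x]> <*> <[y]> = [set: gT].

Lemma heis_val_surj g : g \in map heis_val heis_elems.
Proof.
pose im := [set g | g \in map heis_val heis_elems].
have im_group : group_set im.
  apply/group_setP; split.
    by rewrite in_set -heis_val1 map_f ?mem_heis_elems.
  move=> g1 g2; rewrite !in_set => /mapP[u _ ->] /mapP[v _ ->].
  by rewrite -heis_valM map_f ?mem_heis_elems.
have : [set: gT] \subset Group im_group.
  rewrite -defG join_subG !cycle_subG !in_set.
  apply/andP; split; apply/mapP.
    by exists (T1, T0, T0); rewrite ?mem_heis_elems //= mulg1 mulg1.
  by exists (T0, T1, T0); rewrite ?mem_heis_elems //= mul1g mulg1.
by move/subsetP/(_ g (in_setT g)); rewrite in_set.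
Qed.

Hypothesis card_G : #|[set: gT]| = 27.

Lemma heis_val_inj : injective heis_val.
Proof.
have uniq_im : uniq (map heis_val heis_elems).
  apply: (leq_size_uniq (enum_uniq gT)) => [g _|]; first exact: heis_val_surj.
  by rewrite size_map -cardE -cardsT card_G.
by move=> u v; apply: (uniq_map_inj_in uniq_im); apply: mem_heis_elems.
Qed.

Lemma has_product_one_subseq_heis s :
  has_product_one_subseq (map heis_val s) <-> heis_has_one_subseq s.
Proof.
split=> [/has_product_one_subseqP[t [nz_t sub_t prod_t]] | [t [nz_t sub_t prod_t]]].
  have [t' def_t _] := subset_map_preimage (mem_submultiset sub_t).
  rewrite {}def_t in nz_t sub_t prod_t.
  exists t'; split; first by case: (t') nz_t.
    exact: submultiset_map_inj heis_val_inj sub_t.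
  by apply: heis_val_inj; move: prod_t; rewrite big_map heis_val_prod heis_val1.
apply/has_product_one_subseqP; exists (map heis_val t); split; first by case: (t) nz_t.
  exact: submultiset_map.
by rewrite big_map -heis_val_prod prod_t heis_val1.
Qed.

End HeisenbergImage.

Theorem theorem3p1 (gT : finGroupType)
  (Hcard : #|[set: gT]| = 27)
  (Hnonab : ~~ abelian [set: gT])
  (Hexp : forall x : gT, (x ^+ 3 = 1)%g) :
  (forall s : seq gT, size s = 7 -> has_product_one_subseq s) /\
  is_small_davenport gT 6.
Proof.
have [x [y [defG cxz cyz]]] := central_commutator_generators Hcard Hnonab Hexp.
have heisE := has_product_one_subseq_heis Hexp cxz cyz defG Hcard.
have surj g : g \in map (heis_val x y) heis_elems := heis_val_surj Hexp cxz cyz defG g.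
have upper (s : seq gT) : size s = 7 -> has_product_one_subseq s.
  have [u -> _] := subset_map_preimage (t := s) (fun g _ => surj g).
  by rewrite size_map => size_u; apply/heisE/heis_has_one_subseq7.
split=> //; split; last by move=> s; apply: product_one_free_size_lt upper.
exists (map (heis_val x y) free_witness); split; first by rewrite size_map.
by move/heisE; apply: free_witness_free.
Qed.
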